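(* Let $\{M_p\mid p\in P\}$ be a Morse decomposition of a multivector field on a finite simplicial complex $K$, with associated $P$-filtered chain complex $(C,d)$, let $(\bar C,\bar d)$ be a Conley complex of $(C,d)$, let $f:K\to\mathbb R$ be Lyapunov for the Morse decomposition, and let $P_f$ be an $f$-compatible order. Then the persistence modules $H(\mathbf C,P_f)$ and $H(\bar{\mathbf C},P_f)$ are isomorphic.
   Context: $K$ is a finite simplicial complex; a multivector field $\mathcal V$ on $K$ is a partition of $K$ into convex sets $V$ (if $\sigma,\tau\in V$ and $\sigma\le\mu\le\tau$ in the face order then $\mu\in V$); $F_{\mathcal V}(\sigma)=[\sigma]_{\mathcal V}\cup\{\tau:\tau\le\sigma\}$ where $[\sigma]_{\mathcal V}$ is the part containing $\sigma$; a path is a sequence $\sigma_1,\dots,\sigma_r$ with $\sigma_k\in F_{\mathcal V}(\sigma_{k-1})$. A Morse decomposition indexed by a finite poset $(P,\le_P)$ is a partition $K=\bigsqcup_{p\in P}M_p$ such that every path from $M_p$ to $M_q$ has $q\le_P p$. Let $m=|P|$. $(C,d)$: $C_p$ is the $\mathbb Z_2$-span of the simplices in $M_p$ (graded by dimension), $C=\bigoplus_pC_p$ the simplicial chains of $K$ over $\mathbb Z_2$, $d$ the simplicial boundary. For $P$-graded spaces and a linear map $h$, $h_{pq}=\pi_p h\iota_q$, and $h$ is $P$-filtered if $h_{pq}\ne0\Rightarrow p\le_P q$. A $P$-filtered chain complex is a $\mathbb Z_2$ chain complex with a $P$-gradation (compatible with degree) whose differential is $P$-filtered. Filtered chain maps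 are $P$-filtered chain maps; filtered chain maps $\varphi,\psi$ are filtered chain homotopic if $\psi-\varphi=d'S+Sd$ for some $P$-filtered degree-raising-by-one linear $S$; two $P$-filtered complexes are filtered chain homotopic if there are filtered chain maps $\varphi,\varphi'$ between them with $\varphi'\varphi$ and $\varphi\varphi'$ filtered chain homotopic to the identities. A Conley complex of $(C,d)$ is a $P$-filtered chain complex $(\bar C,\bar d)$ filtered chain homotopic to $(C,d)$ with $\bar d_{pp}=0$ for all $p$. $f:K\to\mathbb R$ is Lyapunov if $f$ is constant on each $M_p$, with value $f(p)$, and $p\le_P q\Rightarrow f(p)\le f(q)$. An $f$-compatible order $P_f$ is an enumeration $p_1,\dots,p_m$ of $P$ that is a linear extension of $\le_P$ with $f(p_1)\le\dots\le f(p_m)$. For a $P$-filtered chain complex $(D,\delta)$, $\mathbf D_{p_i}=\bigoplus_{j\le i}D_{p_j}$ with the restricted differential is a subcomplex, and $H(\mathbf D,P_f)$ is the persistence module $H_*(\mathbf D_{p_1})\to\dots\to H_*(\mathbf D_{p_m})$ with maps induced by inclusions; this applies to $(C,d)$ giving $H(\mathbf C,P_f)$ and to $(\bar C,\bar d)$ giving $H(\bar{\mathbf C},P_f)$. *)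

From Stdlib Require Import Reals.
From HB Require Import structures.
From mathcomp Require Import all_boot all_order all_algebra.

Set Implicit Arguments.
Unset Strict Implicit.
Unset Printing Implicit Defensive.

Import Order.TTheory GRing.Theory.
Local Open Scope ring_scope.

Section Combinatorics.
Variable V : finType.

Definition is_simplicial_complex (K : {set {set V}}) : Prop :=
  (forall s, s \in K -> s != set0) /\
  (forall s t, s \in K -> t != set0 -> t \subset s -> t \in K).

Definition is_multivector_field (K : {set {set V}}) (mv : {set {set {set V}}})
  : Prop :=
  partition mv K /\
  (forall A, A \in mv -> forall s u t : {set V},
      s \in A -> t \in A -> s \subset u -> u \subset t -> u \in A).

Definition Fmv (K : {set {set V}}) (mv : {set {set {set V}}}) (s : {set V})
  : {set {set V}} :=
  pblock mv s :|: [set t in K | t \subset s].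

Definition mv_path (K : {set {set V}}) (mv : {set {set {set V}}})
  (s : {set V}) (rest : seq {set V}) : bool :=
  path (fun a b => b \in Fmv K mv a) s rest.

(* A P-indexed partition of K is encoded by the index map mi : simplex -> P;
   the Morse set M_p is { s in K | mi s = p }. *)
Definition Morse_set (d : Order.disp_t) (P : finPOrderType d)
  (K : {set {set V}}) (mi : {set V} -> P) (p : P) : {set {set V}} :=
  [set s in K | mi s == p].

Definition is_Morse_decomposition (d : Order.disp_t) (P : finPOrderType d)
  (K : {set {set V}}) (mv : {set {set {set V}}}) (mi : {set V} -> P) : Prop :=
  (forall p, Morse_set K mi p != set0) /\
  (forall p q s rest, s \in Morse_set K mi p ->
      last s rest \in Morse_set K mi q -> mv_path K mv s rest -> (q <= p)%O).

Definition is_Lyapunov (d : Order.disp_t) (P : finPOrderType d)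
  (K : {set {set V}}) (mi : {set V} -> P) (f : {set V} -> R) (fP : P -> R)
  : Prop :=
  (forall p s, s \in Morse_set K mi p -> f s = fP p) /\
  (forall p q, (p <= q)%O -> Rle (fP p) (fP q)).

End Combinatorics.

(* f-compatible order: the enumeration p_1, ..., p_m of P is the sequence s,
   p_i being the element of index i-1 in s. *)
Definition f_compatible (d : Order.disp_t) (P : finPOrderType d)
  (fP : P -> R) (s : seq P) : Prop :=
  uniq s /\ (forall p, p \in s) /\
  (forall p q, (p <= q)%O -> (index p s <= index q s)%N) /\
  (forall p q, (index p s <= index q s)%N -> Rle (fP p) (fP q)).

(* A (finite-dimensional) P-filtered chain complex over Z_2 is given by a
   finite homogeneous basis B, a degree deg : B -> int, a grade gr : B -> P
   and a differential given by its matrix dB : B -> B -> 'F_2, where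
   dB x y is the coefficient of x in the image of y.  Linear maps between
   such spaces are given likewise by matrices (kernels). *)

Definition kcomp (B'' B' B : finType) (g : B'' -> B' -> 'F_2)
  (h : B' -> B -> 'F_2) : B'' -> B -> 'F_2 :=
  fun x y => \sum_(z : B') g x z * h z y.

Definition kid (B : finType) : B -> B -> 'F_2 := fun x y => (x == y)%:R.

Section Filtered.
Variables (d : Order.disp_t) (P : finPOrderType d).

Definition is_Pfiltered_complex (B : finType) (deg : B -> int) (gr : B -> P)
  (dB : B -> B -> 'F_2) : Prop :=
  (forall x y, dB x y != 0 -> deg y = deg x + 1) /\
  (forall x y, dB x y != 0 -> (gr x <= gr y)%O) /\
  (forall x y, kcomp dB dB x y = 0).

Definition is_filtered_chain_map (B B' : finType)
  (deg : B -> int) (gr : B -> P) (dB : B -> B -> 'F_2)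
  (deg' : B' -> int) (gr' : B' -> P) (dB' : B' -> B' -> 'F_2)
  (phi : B' -> B -> 'F_2) : Prop :=
  (forall x y, phi x y != 0 -> deg' x = deg y) /\
  (forall x y, phi x y != 0 -> (gr' x <= gr y)%O) /\
  (forall x y, kcomp dB' phi x y = kcomp phi dB x y).

Definition filtered_chain_homotopic_maps (B B' : finType)
  (deg : B -> int) (gr : B -> P) (dB : B -> B -> 'F_2)
  (deg' : B' -> int) (gr' : B' -> P) (dB' : B' -> B' -> 'F_2)
  (phi psi : B' -> B -> 'F_2) : Prop :=
  exists S : B' -> B -> 'F_2,
    (forall x y, S x y != 0 -> deg' x = deg y + 1) /\
    (forall x y, S x y != 0 -> (gr' x <= gr y)%O) /\
    (forall x y, psi x y - phi x y = kcomp dB' S x y + kcomp S dB x y).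

Definition filtered_chain_homotopic_complexes (B B' : finType)
  (deg : B -> int) (gr : B -> P) (dB : B -> B -> 'F_2)
  (deg' : B' -> int) (gr' : B' -> P) (dB' : B' -> B' -> 'F_2) : Prop :=
  exists (phi : B' -> B -> 'F_2) (phi' : B -> B' -> 'F_2),
    is_filtered_chain_map deg gr dB deg' gr' dB' phi /\
    is_filtered_chain_map deg' gr' dB' deg gr dB phi' /\
    filtered_chain_homotopic_maps deg gr dB deg gr dB (@kid B) (kcomp phi' phi) /\
    filtered_chain_homotopic_maps deg' gr' dB' deg' gr' dB' (@kid B') (kcomp phi phi').

Definition is_Conley_complex (B Bb : finType)
  (deg : B -> int) (gr : B -> P) (dB : B -> B -> 'F_2)
  (degb : Bb -> int) (grb : Bb -> P) (db : Bb -> Bb -> 'F_2) : Prop :=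
  is_Pfiltered_complex degb grb db /\
  filtered_chain_homotopic_complexes deg gr dB degb grb db /\
  (forall x y, grb x = grb y -> db x y = 0).

Section Homology.
Variables (s : seq P) (B : finType) (deg : B -> int) (gr : B -> P)
  (dB : B -> B -> 'F_2).

Notation chain := {ffun B -> 'F_2}.

Definition kapp (c : chain) : chain := [ffun x => \sum_y dB x y * c y].

(* degree-n chains of the subcomplex D_{p_(i+1)} = sum_{j <= i} D_{s_j} *)
Definition sub_chains (i : nat) (n : int) : {set chain} :=
  [set c : chain | [forall b, (c b != 0) ==>
                      ((index (gr b) s <= i)%N && (deg b == n))]].

Definition cycles (i : nat) (n : int) : {set chain} :=
  [set c in sub_chains i n | kapp c == 0].

Definition boundaries (i : nat) (n : int) : {set chain} :=
  [set kapp e | e in sub_chains i (n + 1)].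

(* homology H_n(D_{p_(i+1)}) as the set of cosets z + B_n *)
Definition homology (i : nat) (n : int) : {set {set chain}} :=
  [set [set z + b | b : chain in boundaries i n] | z : chain in cycles i n].

End Homology.

Definition csum (B : finType) (X Y : {set {ffun B -> 'F_2}}) :
  {set {ffun B -> 'F_2}} := [set x + y | x : {ffun B -> 'F_2} in X, y : {ffun B -> 'F_2} in Y].

(* Isomorphism of the persistence modules H(D, P_f) and H(Db, P_f):
   for each index i < m and degree n, an additive (= Z_2-linear) bijection
   alpha i n : H_n(D_{p_(i+1)}) -> H_n(Db_{p_(i+1)}), commuting with the maps
   induced by the inclusions D_{p_(i+1)} -> D_{p_(i+2)} (which send the class
   X to the class X + B_n(D_{p_(i+2)})). *)
Definition pm_isomorphic (s : seq P) (B Bb : finType)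
  (deg : B -> int) (gr : B -> P) (dB : B -> B -> 'F_2)
  (degb : Bb -> int) (grb : Bb -> P) (db : Bb -> Bb -> 'F_2) : Prop :=
  exists alpha : nat -> int -> {set {ffun B -> 'F_2}} -> {set {ffun Bb -> 'F_2}},
    (forall i n, (i < size s)%N ->
       (forall X, X \in homology s deg gr dB i n ->
                  alpha i n X \in homology s degb grb db i n) /\
       (forall X Y, X \in homology s deg gr dB i n ->
                    Y \in homology s deg gr dB i n ->
                    alpha i n X = alpha i n Y -> X = Y) /\
       (forall Y, Y \in homology s degb grb db i n ->
                  exists2 X, X \in homology s deg gr dB i n & alpha i n X = Y) /\
       (forall X Y, X \in homology s deg gr dB i n ->
                    Y \in homology s deg gr dB i n ->
                    alpha i n (csum X Y) = csum (alpha i n X) (alpha i n Y))) /\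
    (forall i n, (i.+1 < size s)%N ->
       forall X, X \in homology s deg gr dB i n ->
         alpha i.+1 n (csum X (boundaries s deg gr dB i.+1 n)) =
         csum (alpha i n X) (boundaries s degb grb db i.+1 n)).

End Filtered.

Section Simplicial.
Variables (V : finType) (K : {set {set V}}).

Definition simp : finType := {s : {set V} | s \in K}.

Definition simp_deg (x : simp) : int := ((#|val x|).-1)%:Z.

Definition simp_gr (d : Order.disp_t) (P : finPOrderType d)
  (mi : {set V} -> P) (x : simp) : P := mi (val x).

Definition simp_bd (x y : simp) : 'F_2 :=
  ((val x \subset val y) && (#|val y| == (#|val x|).+1)%N)%:R.

End Simplicial.

From Stdlib Require Import Reals.
From HB Require Import structures.
From mathcomp Require Import all_boot all_order all_algebra.

(* Since P_f is a linear extension of <=_P, a P-filtered map sends the subcomplex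
   C_(p_i) into Cbar_(p_i) (and conversely), so the filtered chain homotopy
   equivalence between C and its Conley complex restricts to a chain homotopy
   equivalence at every stage.  The chain map therefore induces isomorphisms
   H(C_(p_i)) -> H(Cbar_(p_i)), and they commute with the maps induced by the
   inclusions because every stage uses the same chain map.  Beyond that, the
   proof does not use the Morse decomposition or the Lyapunov function. *)

Set Implicit Arguments.
Unset Strict Implicit.
Unset Printing Implicit Defensive.

Import GRing.Theory.
Local Open Scope ring_scope.

Section Cosets.
Variables (B : finType) (H : {set {ffun B -> 'F_2}}).
Hypothesis zmodH : zmod_closed H.

Definition add_coset (z : {ffun B -> 'F_2}) : {set {ffun B -> 'F_2}} :=
  [set z + b | b in H].

Lemma mem_add_coset z : z \in add_coset z.
Proof. by apply/imsetP; exists 0; [exact: zmodH.1 | rewrite addr0]. Qed.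

Lemma add_cosetP z w : reflect (add_coset z = add_coset w) (z - w \in H).
Proof.
have [H0 HD] := GRing.zmod_closedD zmodH; have HN := GRing.zmod_closedN zmodH.
apply: (iffP idP) => [zwH | eq_zw]; last first.
  by move: (mem_add_coset z); rewrite eq_zw => /imsetP [b bH ->]; rewrite addrC addKr.
apply/setP => x; apply/imsetP/imsetP => -[b bH ->].
  by exists (z - w + b); [exact: HD | rewrite addrA subrKC].
by exists (- (z - w) + b); [apply: HD; first exact: HN | rewrite addrA opprB subrKC].
Qed.

Lemma csum_add_coset z w :
  csum (add_coset z) (add_coset w) = add_coset (z + w).
Proof.
have [H0 HD] := GRing.zmod_closedD zmodH.
apply/setP => x; apply/imset2P/imsetP.
  move=> [_ _ /imsetP [b bH ->] /imsetP [c cH ->] ->].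
  by exists (b + c); [exact: HD | rewrite addrACA].
by move=> [b bH ->]; exists (z + b) w; rewrite ?mem_add_coset ?imset_f // addrAC.
Qed.

Lemma csum_sub_add_coset (A : {set {ffun B -> 'F_2}}) w :
  w \in A -> A \subset add_coset w -> csum A H = add_coset w.
Proof.
have [H0 HD] := GRing.zmod_closedD zmodH.
move=> wA /subsetP sAw; apply/setP => x; apply/imset2P/imsetP.
  move=> [_ c /sAw /imsetP [b bH ->] cH ->].
  by exists (b + c); [exact: HD | rewrite addrA].
by move=> [b bH ->]; exists w b.
Qed.

End Cosets.

Lemma csum_add_coset_subset (B : finType) (H H' : {set {ffun B -> 'F_2}}) z :
  zmod_closed H -> zmod_closed H' -> H \subset H' ->
  csum (add_coset H z) H' = add_coset H' z.
Proof.
move=> zmodH zmodH' sHH'; apply: csum_sub_add_coset => //; last exact: imsetS.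
exact: mem_add_coset.
Qed.

Definition kmap (B' B : finType) (M : B' -> B -> 'F_2) (c : {ffun B -> 'F_2}) :
  {ffun B' -> 'F_2} := [ffun x => \sum_y M x y * c y].

Section MatrixAction.
Variables B'' B' B : finType.

Lemma kmap_is_zmod_morphism (M : B' -> B -> 'F_2) : zmod_morphism (kmap M).
Proof.
move=> c1 c2; apply/ffunP => x; rewrite !ffunE -sumrB; apply: eq_bigr => y _.
by rewrite !ffunE mulrBr.
Qed.

HB.instance Definition _ (M : B' -> B -> 'F_2) :=
  GRing.isZmodMorphism.Build _ _ (kmap M) (kmap_is_zmod_morphism M).

Lemma eq_kmap (M N : B' -> B -> 'F_2) : M =2 N -> kmap M =1 kmap N.
Proof.
by move=> eqMN c; apply/ffunP => x; rewrite !ffunE; apply: eq_bigr => y _; rewrite eqMN.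
Qed.

Lemma kmap_kcomp (M : B'' -> B' -> 'F_2) (N : B' -> B -> 'F_2) c :
  kmap (kcomp M N) c = kmap M (kmap N c).
Proof.
apply/ffunP => x; rewrite !ffunE /kcomp.
under eq_bigr do rewrite big_distrl.
rewrite exchange_big /=; apply: eq_bigr => z _.
by rewrite ffunE big_distrr /=; apply: eq_bigr => y _; rewrite mulrA.
Qed.

Lemma kmapBDl (M M' N L : B' -> B -> 'F_2) c :
  (forall x y, M x y - M' x y = N x y + L x y) ->
  kmap M c - kmap M' c = kmap N c + kmap L c.
Proof.
move=> eqM; apply/ffunP => x; rewrite !ffunE -sumrB -big_split /=.
by apply: eq_bigr => y _; rewrite -mulrBl -mulrDl eqM.
Qed.

End MatrixAction.

Lemma kmap_kid (B : finType) : kmap (@kid B) =1 id.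
Proof.
move=> c; apply/ffunP => x.
rewrite ffunE (bigD1 x) //= big1 ?addr0 /kid ?eqxx ?mul1r //.
by move=> y; rewrite eq_sym => /negbTE ->; rewrite mul0r.
Qed.

Lemma kappE (B : finType) (dB : B -> B -> 'F_2) : kapp dB =1 kmap dB.
Proof. by []. Qed.

Section FilteredChains.
Variables (d : Order.disp_t) (P : finPOrderType d) (s : seq P).
Hypothesis index_homo : {homo index^~ s : p q / (p <= q)%O >-> (p <= q)%N}.

Section Subcomplexes.
Variables (B : finType) (deg : B -> int) (gr : B -> P) (dB : B -> B -> 'F_2).

Lemma sub_chainsP i n (c : {ffun B -> 'F_2}) :
  reflect (forall b, c b != 0 -> (index (gr b) s <= i)%N /\ deg b = n)
    (c \in sub_chains s deg gr i n).
Proof.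
rewrite inE; apply: (iffP forallP) => [supp_c b nz_cb | supp_c b].
  by move: (supp_c b); rewrite nz_cb => /andP [-> /eqP].
by apply/implyP => /supp_c [-> ->]; rewrite eqxx.
Qed.

Lemma sub_chains_zmod_closed i n : zmod_closed (sub_chains s deg gr i n).
Proof.
split; first by apply/sub_chainsP => b; rewrite ffunE eqxx.
move=> c1 c2 /sub_chainsP c1_sub /sub_chainsP c2_sub; apply/sub_chainsP => b.
rewrite !ffunE; have [/c1_sub // | /negPn/eqP ->] := boolP (c1 b != 0).
by rewrite sub0r oppr_eq0 => /c2_sub.
Qed.

Lemma sub_chainsS i n : sub_chains s deg gr i n \subset sub_chains s deg gr i.+1 n.
Proof.
by apply/subsetP => c /sub_chainsP c_sub; apply/sub_chainsP => b /c_sub [/leqW].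
Qed.

Lemma cyclesP i n (z : {ffun B -> 'F_2}) :
  reflect (z \in sub_chains s deg gr i n /\ kmap dB z = 0)
    (z \in cycles s deg gr dB i n).
Proof.
rewrite [X in reflect _ X]in_set.
by apply: (iffP andP) => -[zsub /eqP dz]; split => //; apply/eqP.
Qed.

Lemma cyclesS i n : cycles s deg gr dB i n \subset cycles s deg gr dB i.+1 n.
Proof.
apply/subsetP => z /cyclesP [zsub dz]; apply/cyclesP; split => //.
exact: subsetP (sub_chainsS i n) z zsub.
Qed.

Lemma cycles_zmod_closed i n : zmod_closed (cycles s deg gr dB i n).
Proof.
have sub_closed := sub_chains_zmod_closed i n.
split; first by apply/cyclesP; rewrite raddf0 sub_closed.1.
move=> z w /cyclesP [zsub dz] /cyclesP [wsub dw]; apply/cyclesP.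
by split; [exact: sub_closed.2 | rewrite raddfB /= dz dw subrr].
Qed.

Lemma boundaries_zmod_closed i n : zmod_closed (boundaries s deg gr dB i n).
Proof.
have sub_closed := sub_chains_zmod_closed i (n + 1).
split; first by apply/imsetP; exists 0; rewrite ?sub_closed.1 // kappE raddf0.
move=> _ _ /imsetP [e esub ->] /imsetP [f fsub ->]; apply/imsetP.
by exists (e - f); rewrite ?sub_closed.2 // !kappE raddfB.
Qed.

Lemma boundariesS i n :
  boundaries s deg gr dB i n \subset boundaries s deg gr dB i.+1 n.
Proof.
apply/subsetP => _ /imsetP [e esub ->]; apply/imsetP; exists e => //.
exact: (subsetP (sub_chainsS _ _)).
Qed.

Lemma inclusion_add_coset i n z :
  csum (add_coset (boundaries s deg gr dB i n) z) (boundaries s deg gr dB i.+1 n) =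
  add_coset (boundaries s deg gr dB i.+1 n) z.
Proof.
by apply: csum_add_coset_subset; [apply: boundaries_zmod_closed.. | apply: boundariesS].
Qed.

Lemma homologyP i n X :
  reflect (exists2 z, z \in cycles s deg gr dB i n &
                      X = add_coset (boundaries s deg gr dB i n) z)
    (X \in homology s deg gr dB i n).
Proof. exact: imsetP. Qed.

End Subcomplexes.

Section FilteredMaps.
Variables (B B' : finType).
Variables (deg : B -> int) (gr : B -> P) (dB : B -> B -> 'F_2).
Variables (deg' : B' -> int) (gr' : B' -> P) (dB' : B' -> B' -> 'F_2).

Lemma kmap_sub_chains (M : B' -> B -> 'F_2) (k : int) i n c :
  (forall x y, M x y != 0 -> deg' x = deg y + k) ->
  (forall x y, M x y != 0 -> (gr' x <= gr y)%O) ->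
  c \in sub_chains s deg gr i n -> kmap M c \in sub_chains s deg' gr' i (n + k).
Proof.
move=> M_deg M_gr /sub_chainsP c_sub; apply/sub_chainsP => x.
rewrite ffunE => nz_sum.
have [y nz_Mc] : exists y, M x y * c y != 0.
  apply/existsP; apply: contraR nz_sum => /existsPn Mc0.
  by apply/eqP; rewrite big1 // => y _; apply/eqP/negPn.
have nz_M : M x y != 0 by apply: contraNneq nz_Mc => ->; rewrite mul0r.
have [iy <-] : (index (gr y) s <= i)%N /\ deg y = n.
  by apply: c_sub; apply: contraNneq nz_Mc => ->; rewrite mulr0.
by split; [exact: leq_trans (index_homo (M_gr _ _ nz_M)) iy | exact: M_deg].
Qed.

Lemma homotopic_cycles_diff (phi psi : B' -> B -> 'F_2) i n z :
  filtered_chain_homotopic_maps deg gr dB deg' gr' dB' phi psi ->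
  z \in cycles s deg gr dB i n ->
  kmap psi z - kmap phi z \in boundaries s deg' gr' dB' i n.
Proof.
move=> [S [S_deg [S_gr homot]]] /cyclesP [zsub dz].
apply/imsetP; exists (kmap S z); first exact: kmap_sub_chains zsub.
by rewrite (kmapBDl _ homot) !kmap_kcomp dz raddf0 addr0.
Qed.

Section ChainMap.
Variable phi : B' -> B -> 'F_2.
Hypothesis phi_map : is_filtered_chain_map deg gr dB deg' gr' dB' phi.

Lemma kmap_chain_map c : kmap dB' (kmap phi c) = kmap phi (kmap dB c).
Proof. by case: phi_map => _ [_ phi_d]; rewrite -!kmap_kcomp; apply: eq_kmap. Qed.

Lemma kmap_chain_map_sub i n c :
  c \in sub_chains s deg gr i n -> kmap phi c \in sub_chains s deg' gr' i n.
Proof.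
case: phi_map => phi_deg [phi_gr _] csub; rewrite -[n]addr0.
by apply: kmap_sub_chains csub => // x y /phi_deg ->; rewrite addr0.
Qed.

Lemma kmap_chain_map_cycles i n z :
  z \in cycles s deg gr dB i n -> kmap phi z \in cycles s deg' gr' dB' i n.
Proof.
move=> /cyclesP [zsub dz]; apply/cyclesP.
by rewrite kmap_chain_map dz raddf0 kmap_chain_map_sub.
Qed.

End ChainMap.

End FilteredMaps.

Section InducedMap.
Variables (B B' : finType).
Variables (deg : B -> int) (gr : B -> P) (dB : B -> B -> 'F_2).
Variables (deg' : B' -> int) (gr' : B' -> P) (dB' : B' -> B' -> 'F_2).
Variable phi : B' -> B -> 'F_2.
Hypothesis phi_map : is_filtered_chain_map deg gr dB deg' gr' dB' phi.

Definition induced_map i n (X : {set {ffun B -> 'F_2}}) : {set {ffun B' -> 'F_2}} :=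
  csum (kmap phi @: X) (boundaries s deg' gr' dB' i n).

Lemma induced_map_add_coset i n z :
  z \in cycles s deg gr dB i n ->
  induced_map i n (add_coset (boundaries s deg gr dB i n) z) =
  add_coset (boundaries s deg' gr' dB' i n) (kmap phi z).
Proof.
move=> zcyc; apply: csum_sub_add_coset; first exact: boundaries_zmod_closed.
  by apply: imset_f; apply: mem_add_coset; apply: boundaries_zmod_closed.
apply/subsetP => _ /imsetP [_ /imsetP [_ /imsetP [e esub ->] ->] ->].
rewrite kappE raddfD /= -(kmap_chain_map phi_map); apply: imset_f.
by apply: imset_f; exact: (kmap_chain_map_sub phi_map esub).
Qed.

Lemma induced_map_homology i n X :
  X \in homology s deg gr dB i n ->
  induced_map i n X \in homology s deg' gr' dB' i n.
Proof.
move=> /homologyP [z zcyc ->]; rewrite induced_map_add_coset //.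
by apply: imset_f; exact: (kmap_chain_map_cycles phi_map zcyc).
Qed.

Lemma induced_mapD i n X Y :
  X \in homology s deg gr dB i n -> Y \in homology s deg gr dB i n ->
  induced_map i n (csum X Y) = csum (induced_map i n X) (induced_map i n Y).
Proof.
move=> /homologyP [z zcyc ->] /homologyP [w wcyc ->].
have [_ cycD] := GRing.zmod_closedD (cycles_zmod_closed deg gr dB i n).
rewrite (csum_add_coset (boundaries_zmod_closed _ _ _ _ _)).
rewrite !induced_map_add_coset ?cycD // raddfD.
by rewrite (csum_add_coset (boundaries_zmod_closed _ _ _ _ _)).
Qed.

Lemma induced_map_inclusion i n X :
  X \in homology s deg gr dB i n ->
  induced_map i.+1 n (csum X (boundaries s deg gr dB i.+1 n)) =
  csum (induced_map i n X) (boundaries s deg' gr' dB' i.+1 n).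
Proof.
move=> /homologyP [z zcyc ->].
have zcyc1 := subsetP (cyclesS deg gr dB i n) z zcyc.
by rewrite inclusion_add_coset !induced_map_add_coset // inclusion_add_coset.
Qed.

Variable phi' : B -> B' -> 'F_2.
Hypothesis phi'_map : is_filtered_chain_map deg' gr' dB' deg gr dB phi'.

Lemma induced_map_inj i n X Y :
  filtered_chain_homotopic_maps deg gr dB deg gr dB (@kid B) (kcomp phi' phi) ->
  X \in homology s deg gr dB i n -> Y \in homology s deg gr dB i n ->
  induced_map i n X = induced_map i n Y -> X = Y.
Proof.
move=> homot /homologyP [z zcyc ->] /homologyP [w wcyc ->].
have bd_closed := boundaries_zmod_closed deg gr dB i n.
have bd'_closed := boundaries_zmod_closed deg' gr' dB' i n.
have zwcyc := (cycles_zmod_closed deg gr dB i n).2 z w zcyc wcyc.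
rewrite !induced_map_add_coset // => /(add_cosetP bd'_closed) /imsetP [e esub de].
apply/(add_cosetP bd_closed).
(* phi' (phi (z - w)) = phi' (d e) = d (phi' e), and it differs from z - w by
   a boundary because phi' phi is homotopic to the identity. *)
have bd_phi'phi : kmap phi' (kmap phi (z - w)) \in boundaries s deg gr dB i n.
  rewrite raddfB /= de kappE -(kmap_chain_map phi'_map); apply: imset_f.
  exact: (kmap_chain_map_sub phi'_map esub).
have := homotopic_cycles_diff homot zwcyc; rewrite kmap_kcomp kmap_kid => bd_diff.
by rewrite -[z - w](subKr (kmap phi' (kmap phi (z - w)))) bd_closed.2.
Qed.

Lemma induced_map_surj i n Y :
  filtered_chain_homotopic_maps deg' gr' dB' deg' gr' dB' (@kid B') (kcomp phi phi') ->
  Y \in homology s deg' gr' dB' i n ->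
  exists2 X, X \in homology s deg gr dB i n & induced_map i n X = Y.
Proof.
move=> homot /homologyP [w wcyc ->].
have w'cyc := kmap_chain_map_cycles phi'_map wcyc.
exists (add_coset (boundaries s deg gr dB i n) (kmap phi' w)); first exact: imset_f.
rewrite induced_map_add_coset //; apply/add_cosetP; first exact: boundaries_zmod_closed.
by have := homotopic_cycles_diff homot wcyc; rewrite kmap_kcomp kmap_kid.
Qed.

End InducedMap.

Theorem filtered_homotopy_equivalence_pm_isomorphic (B Bb : finType)
  (deg : B -> int) (gr : B -> P) (dB : B -> B -> 'F_2)
  (degb : Bb -> int) (grb : Bb -> P) (db : Bb -> Bb -> 'F_2) :
  filtered_chain_homotopic_complexes deg gr dB degb grb db ->
  pm_isomorphic s deg gr dB degb grb db.
Proof.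
move=> [phi [phi' [phi_map [phi'_map [homot homot']]]]].
exists (induced_map degb grb db phi); split=> i n _.
  split; first by move=> X HX; exact: (induced_map_homology phi_map HX).
  split.
    by move=> X Y HX HY; exact: (induced_map_inj phi_map phi'_map homot HX HY).
  split; first by move=> Y HY; exact: (induced_map_surj phi_map phi'_map homot' HY).
  by move=> X Y HX HY; exact: (induced_mapD phi_map HX HY).
by move=> X HX; exact: (induced_map_inclusion phi_map HX).
Qed.

End FilteredChains.

Theorem proposition9 (V : finType) (K : {set {set V}})
  (mv : {set {set {set V}}})
  (d : Order.disp_t) (P : finPOrderType d) (mi : {set V} -> P)
  (Bb : finType) (degb : Bb -> int) (grb : Bb -> P) (db : Bb -> Bb -> 'F_2)
  (f : {set V} -> R) (fP : P -> R) (s : seq P) :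
  is_simplicial_complex K ->
  is_multivector_field K mv ->
  is_Morse_decomposition K mv mi ->
  is_Conley_complex (@simp_deg V K) (@simp_gr V K d P mi) (@simp_bd V K)
    degb grb db ->
  is_Lyapunov K mi f fP ->
  f_compatible fP s ->
  pm_isomorphic s (@simp_deg V K) (@simp_gr V K d P mi) (@simp_bd V K)
    degb grb db.
Proof.
move=> _ _ _ [_ [equiv _]] _ [_ [_ [index_homo _]]].
exact: (filtered_homotopy_equivalence_pm_isomorphic index_homo equiv).
Qed.
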